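(* Let $p\ge1$, $\sigma,B,R>0$, $S_0:=\{x\in\mathbb{R}^p:\|x\|\le B\}$, $\mu$ a probability measure on $S_0$, and $G^*$ a probability measure on $\{\beta:\|\beta\|\le R\}$. Let $\mathcal{G}$ be the class of functions $x\mapsto\frac12\mathfrak{H}^2(f^G_x,f^{G^*}_x)$ on $S_0$, as $G$ ranges over all probability measures on $\{\beta\in\mathbb{R}^p:\|\beta\|\le R\}$, and let $T_{G^*}:=\int\big(\int\sqrt{f^{G^*}_x(y)}\,dy\big)^2d\mu(x)$ (assumed finite). Then for every $\epsilon>0$, $$N_{[]}(\epsilon,\mathcal{G},L_2(\mu))\le N\Big(\frac{\epsilon^2}{4T_{G^*}},\mathcal{M}_R,\|\cdot\|_\infty\Big).$$
   Context: $\phi$ is the standard normal density; $f^G_x(y):=\int\frac1\sigma\phi\big(\frac{y-x^\top\beta}{\sigma}\big)\,dG(\beta)$; $\mathfrak{H}^2(f,g)=\int(\sqrt f-\sqrt g)^2dy$. $\mathcal{M}_R:=\{(x,y)\mapsto f^G_x(y):G\text{ a probability measure supported on }\{\beta:\|\beta\|\le R\}\}$, and $\|\cdot\|_\infty$ is the pseudometric $(f^G,f^{G'})\mapsto\sup_{x\in S_0,y\in\mathbb{R}}|f^G_x(y)-f^{G'}_x(y)|$; $N(\eta,T,\mathfrak{d})$ is the smallest cardinality of an $\eta$-cover of $T$ under $\mathfrak{d}$. $N_{[]}(\epsilon,\mathcal{G},L_2(\mu))$ is the $\epsilon$-bracketing number: the smallest number of pairs of functions $(g^L_j,g^U_j)$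 with $\|g^U_j-g^L_j\|_{L_2(\mu)}\le\epsilon$ such that every $g\in\mathcal{G}$ satisfies $g^L_j\le g\le g^U_j$ for some $j$. *)

(* R^p is modelled as [p.-tuple R], which carries the
   product (= Borel) sigma-algebra [measure_tuple_display] in MathComp-Analysis. *)
From HB Require Import structures.
From mathcomp Require Import all_boot all_order all_algebra.
From mathcomp Require Import all_classical all_reals all_analysis.
Set Implicit Arguments. Unset Strict Implicit. Unset Printing Implicit Defensive.
Import Order.TTheory GRing.Theory Num.Theory.
Import numFieldNormedType.Exports.
Local Open Scope classical_set_scope.
Local Open Scope ring_scope.

Section defs.
Variables (R : realType) (p : nat).

Definition phi (t : R) : R := normal_pdf 0 1 t.

Definition dotp (x b : p.-tuple R) : R := \sum_(i < p) tnth x i * tnth b i.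
Definition enorm (x : p.-tuple R) : R := Num.sqrt (\sum_(i < p) tnth x i ^+ 2).

Definition cball (r : R) : set (p.-tuple R) := [set b | enorm b <= r].

Definition supported_on (G : probability (p.-tuple R) R) (A : set (p.-tuple R)) :=
  G (~` A) = 0%E.

Definition fmix (sigma : R) (G : probability (p.-tuple R) R)
  (x : p.-tuple R) (y : R) : R :=
  fine (\int[G]_b ((sigma^-1 * phi ((y - dotp x b) / sigma))%:E)).

Definition hellinger2 (f g : R -> R) : \bar R :=
  (\int[lebesgue_measure]_y (((Num.sqrt (f y) - Num.sqrt (g y)) ^+ 2)%:E))%E.

Definition Hclass (sigma r : R) (Gs : probability (p.-tuple R) R)
  : set (p.-tuple R -> R) :=
  [set g | exists G : probability (p.-tuple R) R, supported_on G (cball r) /\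
     g = (fun x => fine (hellinger2 (fmix sigma G x) (fmix sigma Gs x)) / 2)].

Definition Mclass (sigma r : R) : set (p.-tuple R -> R -> R) :=
  [set f | exists G : probability (p.-tuple R) R, supported_on G (cball r) /\
     f = fmix sigma G].

Definition supdist (S0 : set (p.-tuple R)) (f g : p.-tuple R -> R -> R) : \bar R :=
  ereal_sup [set (`|f x y - g x y|)%:E | x in S0 & y in [set: R]].

(* covering number N(eta, T, d): smallest cardinality of an eta-cover of T
   (centres in T), as an extended real (+oo if no finite cover exists) *)
Definition covering_number (F : Type) (T : set F) (d : F -> F -> \bar R) (eta : R)
  : \bar R :=
  ereal_inf [set (n%:R)%:E | n in [set n : nat | exists c : 'I_n -> F,
     (forall j, T (c j)) /\ (forall f, T f -> exists j, (d f (c j) <= eta%:E)%E)]].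

Definition bracketing_number (mu : probability (p.-tuple R) R)
  (S0 : set (p.-tuple R)) (Gc : set (p.-tuple R -> R)) (eps : R) : \bar R :=
  ereal_inf [set (n%:R)%:E | n in [set n : nat |
     exists gL gU : 'I_n -> p.-tuple R -> R,
     (forall j, measurable_fun setT (gL j) /\ measurable_fun setT (gU j) /\
        (\int[mu]_x (((gU j x - gL j x) ^+ 2)%:E) <= (eps ^+ 2)%:E)%E) /\
     (forall g, Gc g -> exists j, forall x, S0 x -> gL j x <= g x <= gU j x)]].

Definition TG (sigma : R) (mu : probability (p.-tuple R) R)
  (Gs : probability (p.-tuple R) R) : \bar R :=
  (\int[mu]_x (let I := \int[lebesgue_measure]_y ((Num.sqrt (fmix sigma Gs x y))%:E)
               in I * I))%E.

End defs.

From HB Require Import structures.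
From mathcomp Require Import all_boot all_order all_algebra.
From mathcomp Require Import all_classical all_reals all_analysis.
From mathcomp Require Import measurable_realfun ring lra.
Import Order.TTheory GRing.Theory Num.Theory.
Local Open Scope classical_set_scope.
Local Open Scope ring_scope.
Set Implicit Arguments. Unset Strict Implicit.

(* Write h_G(x) = H^2(f^G_x, f^{G*}_x) / 2 and I(x) = \int sqrt (f^{G*}_x(y)) dy,
   so that T_{G*} = \int I^2 dmu.  The argument rests on one inequality about
   probability densities f, g on the line: if |f - g| <= e pointwise, then
     H^2(f, h) <= H^2(g, h) + 2 sqrt e \int sqrt h            (hellinger2_perturb).
   Together with H^2 <= 2 (hellinger2_le2) it gives
     |h_G(x) - h_G'(x)| <= w(x) := min (sqrt e * I(x), 1)      (hel_bracket)
   whenever |f^G_x(y) - f^G'_x(y)| <= e for all y.  Hence an e-cover {f^{G_j}}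
   of M_r in the sup-distance over S0 x R yields brackets [h_{G_j} - w,
   h_{G_j} + w] covering the class, of squared L2(mu)-size
   \int (2 w)^2 dmu <= 4 e T_{G*} (half_width_L2), which is at most eps^2 for
   e = eps^2 / (4 T_{G*}). *)

Lemma sqrt_sub_le (R : rcfType) (a b : R) : 0 <= a -> 0 <= b ->
  Num.sqrt b - Num.sqrt a <= Num.sqrt `|b - a|.
Proof.
move=> a0 b0; set d := Num.sqrt b - Num.sqrt a.
have d_le : `|d| <= Num.sqrt b + Num.sqrt a.
  by rewrite (le_trans (ler_normB _ _)) // !ger0_norm ?sqrtr_ge0.
have sq_le : d ^+ 2 <= `|b - a|.
  have -> : b - a = d * (Num.sqrt b + Num.sqrt a).
    by rewrite /d -subr_sqr !sqr_sqrtr.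
  rewrite -real_normK ?num_real // expr2 normrM.
  by rewrite ler_wpM2l // (le_trans d_le) // real_ler_norm ?num_real.
by rewrite (le_trans (ler_norm d)) // -[`|d|]sqrtr_sqr; exact: ler_wsqrtr.
Qed.

Lemma measurable_sqrt_comp d (X : measurableType d) (R : realType) (f : X -> R) :
  measurable_fun setT f -> measurable_fun setT (fun x => Num.sqrt (f x)).
Proof.
by apply: measurableT_comp; exact: continuous_measurable_fun (@sqrt_continuous R).
Qed.

(* the pointwise inequality behind the Hellinger perturbation bound *)
Lemma hellinger_integrand_shift (R : rcfType) (a b c e : R) :
  0 <= a -> 0 <= b -> `|a - b| <= e ->
  (Num.sqrt a - Num.sqrt c) ^+ 2 + b <=
    (Num.sqrt b - Num.sqrt c) ^+ 2 + a + 2 * Num.sqrt e * Num.sqrt c.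
Proof.
move=> a0 b0 ab_e; rewrite !sqrrB (sqr_sqrtr a0) (sqr_sqrtr b0).
have root_diff : Num.sqrt b - Num.sqrt a <= Num.sqrt e.
  by rewrite (le_trans (sqrt_sub_le a0 b0)) // ler_wsqrtr // distrC.
by have := ler_wpM2l (sqrtr_ge0 c) root_diff; lra.
Qed.

Section HellingerDensities.
Variable R : realType.
Local Notation leb := (@lebesgue_measure R).
Local Open Scope ereal_scope.

Definition density (f : R -> R) :=
  [/\ measurable_fun setT f, (forall y, (0 <= f y)%R) & \int[leb]_y (f y)%:E = 1].

Lemma measurable_hellinger_integrand (f g : R -> R) :
  measurable_fun setT f -> measurable_fun setT g ->
  measurable_fun setT (fun y => ((Num.sqrt (f y) - Num.sqrt (g y)) ^+ 2)%:E).
Proof.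
move=> mf mg; apply: measurableT_comp => //.
by apply/measurable_funX/measurable_funB; exact: measurable_sqrt_comp.
Qed.

Lemma hellinger2_ge0 (f g : R -> R) : 0 <= hellinger2 f g.
Proof. by apply: integral_ge0 => y _; rewrite lee_fin sqr_ge0. Qed.

Lemma hellinger2D_density (u v h : R -> R) :
  measurable_fun setT u -> measurable_fun setT h -> density v ->
  \int[leb]_y (((Num.sqrt (u y) - Num.sqrt (h y)) ^+ 2)%:E + (v y)%:E) =
  hellinger2 u h + 1.
Proof.
move=> mu mh [mv v0 v1]; rewrite -v1.
apply: ge0_integralD => //.
- by move=> y _; rewrite lee_fin sqr_ge0.
- exact: measurable_hellinger_integrand.
- by move=> y _; rewrite lee_fin.
- exact/measurable_EFinP.
Qed.

Variables (f g : R -> R) (hf : density f) (hg : density g).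

Lemma hellinger2_le2 : hellinger2 f g <= 2%:E.
Proof.
have [mf f0 f1] := hf; have [mg g0 g1] := hg.
apply: (@le_trans _ _ (\int[leb]_y ((f y)%:E + (g y)%:E))).
  apply: ge0_le_integral => //.
  - by move=> y _; rewrite lee_fin sqr_ge0.
  - exact: measurable_hellinger_integrand.
  - by apply: emeasurable_funD; exact/measurable_EFinP.
  move=> y _; rewrite -EFinD lee_fin sqrrB !sqr_sqrtr //.
  by have := mulr_ge0 (sqrtr_ge0 (f y)) (sqrtr_ge0 (g y)); lra.
rewrite ge0_integralD //; first by rewrite f1 g1.
- by move=> y _; rewrite lee_fin.
- exact/measurable_EFinP.
- by move=> y _; rewrite lee_fin.
- exact/measurable_EFinP.
Qed.

(* This is the pointwise inequality
   [2 sqrt h (sqrt g - sqrt f) <= 2 sqrt e sqrt h], integrated using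
   [\int f = \int g = 1]. *)
Lemma hellinger2_perturb (h : R -> R) (e : R) : measurable_fun setT h ->
  (forall y, `|f y - g y| <= e)%R ->
  hellinger2 f h <=
    hellinger2 g h + (2 * Num.sqrt e)%:E * \int[leb]_y (Num.sqrt (h y))%:E.
Proof.
move=> mh fg_e; have [mf f0 _] := hf; have [mg g0 _] := hg.
set c := (2 * Num.sqrt e)%R.
have c0 : (0 <= c)%R by rewrite mulr_ge0 ?sqrtr_ge0.
pose sq u y := ((Num.sqrt (u y) - Num.sqrt (h y)) ^+ 2)%:E.
pose root y := (Num.sqrt (h y))%:E.
have mroot : measurable_fun setT root.
  by apply/measurable_EFinP; exact: measurable_sqrt_comp.
have mEf : measurable_fun setT (fun y => (f y)%:E) by exact/measurable_EFinP.
have mEg : measurable_fun setT (fun y => (g y)%:E) by exact/measurable_EFinP.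
have msq u : measurable_fun setT u -> measurable_fun setT (sq u).
  by move=> mu; exact: measurable_hellinger_integrand.
have sq0 u y : 0 <= sq u y by rewrite lee_fin sqr_ge0.
have root0 y : 0 <= root y by rewrite lee_fin sqrtr_ge0.
have rhsE : \int[leb]_y (sq g y + (f y)%:E + c%:E * root y) =
    hellinger2 g h + 1 + c%:E * \int[leb]_y root y.
  rewrite ge0_integralD //.
  - by rewrite hellinger2D_density // ge0_integralZl // lee_fin.
  - by move=> y _; rewrite adde_ge0 ?sq0 ?lee_fin ?f0.
  - exact: emeasurable_funD (msq g mg) mEf.
  - by move=> y _; rewrite mule_ge0 ?root0 ?lee_fin.
  - exact: emeasurable_funM.
have key : \int[leb]_y (sq f y + (g y)%:E) <=
           \int[leb]_y (sq g y + (f y)%:E + c%:E * root y).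
  apply: ge0_le_integral => //.
  - by move=> y _; rewrite adde_ge0 ?sq0 ?lee_fin ?g0.
  - exact: emeasurable_funD (msq f mf) mEg.
  - apply: emeasurable_funD; first exact: emeasurable_funD (msq g mg) mEf.
    exact: emeasurable_funM.
  move=> y _; rewrite /sq /root -EFinM -!EFinD lee_fin.
  exact: hellinger_integrand_shift (f0 y) (g0 y) (fg_e y).
move: key; rewrite hellinger2D_density // rhsE.
by rewrite (addeAC (hellinger2 g h)) leeD2rE.
Qed.

End HellingerDensities.

Lemma measurable_dotp (R : realType) (p : nat) d (X : measurableType d)
    (u v : X -> p.-tuple R) :
  measurable_fun setT u -> measurable_fun setT v ->
  measurable_fun setT (fun z => dotp (u z) (v z)).
Proof.
move=> mu mv; apply: measurable_sum => i; apply: measurable_funM.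
- exact: measurableT_comp (measurable_tnth i) mu.
- exact: measurableT_comp (measurable_tnth i) mv.
Qed.

Section NormalMixture.
Variables (R : realType) (p : nat) (s : R).
Hypothesis s_gt0 : 0 < s.
Local Notation T := (p.-tuple R).

Lemma scaled_phiE (m y : R) : s^-1 * phi ((y - m) / s) = normal_pdf m s y.
Proof.
rewrite /phi /normal_pdf oner_eq0 gt_eqF //= /normal_peak /normal_fun.
rewrite mulrA; congr (_ * expR _); last first.
  by rewrite subr0 expr1n; field; rewrite gt_eqF.
have pi_gt0 : 0 < pi :> R by exact: pi_gt0.
rewrite -invrM ?unitfE ?gt_eqF ?sqrtr_gt0 ?expr1n ?mul1r ?mulrn_wgt0 //.
congr (_^-1).
rewrite mulrC -mulrnAr sqrtrM ?sqr_ge0 // sqrtr_sqr gtr0_norm //.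
by rewrite -pihalfE divr_gt0.
Qed.

Lemma normal_pdf_center (m y : R) : normal_pdf m s y = normal_pdf 0 s (y - m).
Proof. by rewrite /normal_pdf gt_eqF // /normal_fun subr0. Qed.

Lemma measurable_regression_pdf d (X : measurableType d) (u v : X -> T)
    (w : X -> R) :
  measurable_fun setT u -> measurable_fun setT v -> measurable_fun setT w ->
  measurable_fun setT (fun z => normal_pdf (dotp (u z) (v z)) s (w z)).
Proof.
move=> mu mv mw; under eq_fun do rewrite normal_pdf_center.
apply: measurableT_comp (measurable_normal_pdf 0 s) _.
by apply: measurable_funB => //; exact: measurable_dotp.
Qed.

Variable G : probability T R.

Lemma fmixE x y : (fmix s G x y)%:E = (\int[G]_b (normal_pdf (dotp x b) s y)%:E)%E.
Proof.
have mpdf : measurable_fun setT (fun b => normal_pdf (dotp x b) s y).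
  by apply: measurable_regression_pdf => //; exact: measurable_cst.
have pdf_le b : normal_pdf (dotp x b) s y <= normal_peak s.
  by rewrite normal_pdf_ub // gt_eqF.
have fin : (\int[G]_b (normal_pdf (dotp x b) s y)%:E)%E \is a fin_num.
  rewrite ge0_fin_numE; last by apply: integral_ge0 => b _; rewrite lee_fin normal_pdf_ge0.
  apply: (@le_lt_trans _ _ (\int[G]_b (normal_peak s)%:E)%E); last first.
    by rewrite integral_cst // (_ : _ [set: _] = 1%E) ?mule1 ?ltry //; exact: probability_setT.
  apply: ge0_le_integral => //.
  - by move=> b _; rewrite lee_fin normal_pdf_ge0.
  - exact/measurable_EFinP.
  - by move=> b _; rewrite lee_fin.
rewrite /fmix -[RHS](fineK fin); congr (_%:E); congr fine.
by apply: eq_integral => b _; rewrite scaled_phiE.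
Qed.

Lemma fmix_ge0 x y : 0 <= fmix s G x y.
Proof.
by rewrite -lee_fin fmixE; apply: integral_ge0 => b _; rewrite lee_fin normal_pdf_ge0.
Qed.

Lemma measurable_fmix : measurable_fun setT (fun z : T * R => fmix s G z.1 z.2).
Proof.
pose F (zb : (T * R) * T) := (normal_pdf (dotp zb.1.1 zb.2) s zb.1.2)%:E.
have -> : (fun z : T * R => fmix s G z.1 z.2) = fine \o fubini_F G F.
  by apply/funext => z; rewrite /= /fubini_F /F -fmixE.
apply: measurableT_comp (fine_measurable measurableT) _.
apply: measurable_fun_fubini_tonelli_F; last first.
  by move=> zb; rewrite lee_fin normal_pdf_ge0.
apply/measurable_EFinP; apply: measurable_regression_pdf.
- exact: measurableT_comp measurable_fst measurable_fst.
- exact: measurable_snd.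
- exact: measurableT_comp measurable_snd measurable_fst.
Qed.

Lemma fmix_density x : density (fmix s G x).
Proof.
split; [exact: measurable_fun_pair2 x measurable_fmix | exact: fmix_ge0 |].
under eq_integral do rewrite fmixE.
rewrite (@fubini_tonelli _ _ _ _ R lebesgue_measure G
  (fun yb : R * T => (normal_pdf (dotp x yb.2) s yb.1)%:E)) /=; last 2 first.
- apply/measurable_EFinP; apply: measurable_regression_pdf.
  + exact: measurable_cst.
  + exact: measurable_snd.
  + exact: measurable_fst.
- by move=> yb; rewrite lee_fin normal_pdf_ge0.
under eq_integral do rewrite integral_normal_pdf.
by rewrite integral_cst // (_ : _ [set: _] = 1%E) ?mule1 //; exact: probability_setT.
Qed.

End NormalMixture.

Section MixtureBrackets.
Variables (R : realType) (p : nat) (s : R).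
Hypothesis s_gt0 : 0 < s.
Variable Gs : probability (p.-tuple R) R.
Local Notation T := (p.-tuple R).
Local Notation leb := (@lebesgue_measure R).
Local Open Scope ereal_scope.

Definition hel (G : probability T R) (x : T) : \bar R :=
  hellinger2 (fmix s G x) (fmix s Gs x).

Definition root_mass (x : T) : \bar R :=
  \int[leb]_y (Num.sqrt (fmix s Gs x y))%:E.

Lemma root_mass_ge0 x : 0 <= root_mass x.
Proof. by apply: integral_ge0 => y _; rewrite lee_fin sqrtr_ge0. Qed.

Lemma hel_fin G x : hel G x \is a fin_num.
Proof.
rewrite ge0_fin_numE ?hellinger2_ge0 //.
have dens := @fmix_density _ p _ s_gt0.
by rewrite (le_lt_trans (hellinger2_le2 (dens G x) (dens Gs x))) ?ltry.
Qed.

Lemma measurable_sqrt_fmix (G : probability T R) :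
  measurable_fun setT (fun z : T * R => Num.sqrt (fmix s G z.1 z.2)).
Proof. by apply: measurable_sqrt_comp; exact: measurable_fmix. Qed.

Lemma measurable_hel G : measurable_fun setT (hel G).
Proof.
have -> : hel G = fubini_F leb (fun z : T * R =>
    ((Num.sqrt (fmix s G z.1 z.2) - Num.sqrt (fmix s Gs z.1 z.2)) ^+ 2)%:E) by [].
apply: measurable_fun_fubini_tonelli_F.
  apply/measurable_EFinP; apply/measurable_funX/measurable_funB;
  exact: measurable_sqrt_fmix.
by move=> z; rewrite lee_fin sqr_ge0.
Qed.

Lemma measurable_root_mass : measurable_fun setT root_mass.
Proof.
have -> : root_mass = fubini_F leb (fun z : T * R =>
    (Num.sqrt (fmix s Gs z.1 z.2))%:E) by [].
apply: measurable_fun_fubini_tonelli_F.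
  by apply/measurable_EFinP; exact: measurable_sqrt_fmix.
by move=> z; rewrite lee_fin sqrtr_ge0.
Qed.

Definition half_width (e : R) (x : T) : R :=
  fine (mine ((Num.sqrt e)%:E * root_mass x) 1).

Lemma half_widthE e x :
  (half_width e x)%:E = mine ((Num.sqrt e)%:E * root_mass x) 1.
Proof.
have m0 : 0 <= mine ((Num.sqrt e)%:E * root_mass x) 1.
  by rewrite le_min lee01 andbT mule_ge0 ?root_mass_ge0 // lee_fin sqrtr_ge0.
rewrite fineK // ge0_fin_numE //.
by apply: (@le_lt_trans _ _ 1); [rewrite ge_min lexx orbT | exact: ltry].
Qed.

Lemma measurable_half_width e : measurable_fun setT (half_width e).
Proof.
apply: measurableT_comp (fine_measurable measurableT) _.
apply: measurable_mine; last exact: measurable_cst.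
by apply: emeasurable_funM => //; exact: measurable_root_mass.
Qed.

(* If f^G_x is uniformly e-close to f^{G'}_x, then the value of the class
   function at G lies within [half_width e x] of its value at G': the
   perturbation bound gives sqrt e * I(x), the bound H^2 <= 2 gives 1. *)
Lemma hel_bracket G G' x e :
  (forall y, `|fmix s G x y - fmix s G' x y| <= e)%R ->
  (fine (hel G x) / 2 <= fine (hel G' x) / 2 + half_width e x)%R.
Proof.
move=> close.
have dens := @fmix_density _ p _ s_gt0.
have H : hel G x <= hel G' x + 2%:E * (half_width e x)%:E.
  rewrite half_widthE.
  case: (leP ((Num.sqrt e)%:E * root_mass x) 1) => _.
  - have [mfs _ _] := dens Gs x.
    rewrite muleA -EFinM.
    exact: hellinger2_perturb (dens G x) (dens G' x) _ _ mfs close.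
  - rewrite mule1 (le_trans (hellinger2_le2 (dens G x) (dens Gs x))) //.
    by rewrite leeDr // hellinger2_ge0.
move: H; rewrite -(fineK (hel_fin G x)) -(fineK (hel_fin G' x)).
by rewrite -EFinM -EFinD lee_fin /=; lra.
Qed.

Lemma half_width_sq e x : (0 <= e)%R ->
  ((2 * half_width e x) ^+ 2)%:E <= (4 * e)%:E * (root_mass x * root_mass x).
Proof.
move=> e0; have I0 := root_mass_ge0 x.
have [Ifin | Ioo] : root_mass x \is a fin_num \/ root_mass x = +oo.
  by move: I0; case: (root_mass x) => [r||] // _; [left | right].
- rewrite -(fineK Ifin) in I0 *; set r := fine (root_mass x) in I0 *.
  rewrite lee_fin in I0.
  rewrite -!EFinM lee_fin /half_width -(fineK Ifin) -EFinM -EFin_min /=.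
  set v := (Num.min (Num.sqrt e * r) 1)%R.
  have v0 : (0 <= v)%R by rewrite le_min ler01 andbT mulr_ge0 ?sqrtr_ge0.
  have v_le : (v <= Num.sqrt e * r)%R by rewrite ge_min lexx.
  have := sqr_sqrtr e0; rewrite expr2 => see.
  have : (v * v <= (Num.sqrt e * r) * (Num.sqrt e * r))%R by nra.
  by nra.
- rewrite Ioo mulyy.
  have [->|e_neq0] := eqVneq e 0%R.
    by rewrite /half_width Ioo sqrtr0 mul0e min_l ?lee01 //= mulr0 expr0n /= mulr0 mul0e.
  by rewrite mulry gtr0_sg ?mul1e ?leey // mulr_gt0 // lt_def e_neq0 e0.
Qed.

Lemma half_width_L2 (mu : probability T R) e : (0 <= e)%R ->
  \int[mu]_x ((2 * half_width e x) ^+ 2)%:E <= (4 * e)%:E * TG s mu Gs.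
Proof.
move=> e0.
have mI2 : measurable_fun setT (fun x => root_mass x * root_mass x).
  by apply: emeasurable_funM; exact: measurable_root_mass.
rewrite /TG -ge0_integralZl //; last by rewrite lee_fin mulr_ge0.
- apply: ge0_le_integral => //.
  + by move=> x _; rewrite lee_fin sqr_ge0.
  + apply/measurable_EFinP/measurable_funX/measurable_funM => //.
    exact: measurable_half_width.
  + by apply: emeasurable_funM.
  + by move=> x _; exact: half_width_sq.
- by move=> x _; rewrite mule_ge0 ?root_mass_ge0.
Qed.

End MixtureBrackets.

Lemma supdist_le_pointwise (R : realType) (p : nat) (S0 : set (p.-tuple R))
    (f g : p.-tuple R -> R -> R) (e : R) x y :
  (supdist S0 f g <= e%:E)%E -> S0 x -> `|f x y - g x y| <= e.
Proof.
move=> fg_e S0x; rewrite -lee_fin; apply: le_trans fg_e.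
by apply: ereal_sup_ubound; exists x => //; exists y.
Qed.

Lemma brackets_of_cover (R : realType) (p : nat) (sigma B r eta eps : R)
    (mu Gs : probability (p.-tuple R) R) (n : nat) :
  0 < sigma -> 0 <= eta -> ((4 * eta)%:E * TG sigma mu Gs <= (eps ^+ 2)%:E)%E ->
  (exists c : 'I_n -> p.-tuple R -> R -> R,
     (forall j, Mclass sigma r (c j)) /\
     (forall f, Mclass sigma r f ->
        exists j, (supdist (cball B) f (c j) <= eta%:E)%E)) ->
  exists gL gU : 'I_n -> p.-tuple R -> R,
    (forall j, measurable_fun setT (gL j) /\ measurable_fun setT (gU j) /\
       (\int[mu]_x (((gU j x - gL j x) ^+ 2)%:E) <= (eps ^+ 2)%:E)%E) /\
    (forall g, Hclass sigma r Gs g ->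
       exists j, forall x, cball B x -> gL j x <= g x <= gU j x).
Proof.
move=> s_gt0 eta0 small_eta [c [Mc cover]].
have /choice [G centreG] : forall j, exists G, supported_on G (cball r) /\
    c j = fmix sigma G by exact: Mc.
pose centre j x := fine (hel sigma Gs (G j) x) / 2.
have mcentre j : measurable_fun setT (centre j).
  apply: measurable_funM => //; apply: measurableT_comp (fine_measurable _) _ => //.
  exact: measurable_hel.
pose w := half_width sigma Gs eta.
have mw : measurable_fun setT w := measurable_half_width s_gt0 Gs eta.
exists (fun j x => centre j x - w x), (fun j x => centre j x + w x).
split=> [j|g [G' [HG' ->]]].
  split; first exact: measurable_funB.
  split; first exact: measurable_funD.
  have width x : centre j x + w x - (centre j x - w x) = 2 * w x by ring.
  under eq_integral do rewrite width.
  exact: le_trans (half_width_L2 s_gt0 Gs mu eta0) small_eta.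
have [j close_j] := cover _ (ex_intro _ G' (conj HG' erefl)).
exists j => x Bx.
have close y : `|fmix sigma G' x y - fmix sigma (G j) x y| <= eta.
  by rewrite -(centreG j).2; exact: supdist_le_pointwise close_j Bx.
rewrite /centre /w; apply/andP; split.
- rewrite lerBlDr; apply: (hel_bracket s_gt0 Gs) => y.
  by rewrite distrC; exact: close.
- exact: (hel_bracket s_gt0 Gs).
Qed.

Theorem mainTheorem10 (R : realType) (p : nat) (sigma B r : R)
  (mu Gs : probability (p.-tuple R) R) :
  (1 <= p)%N -> 0 < sigma -> 0 < B -> 0 < r ->
  supported_on mu (cball B) ->
  supported_on Gs (cball r) ->
  (TG sigma mu Gs < +oo)%E ->
  forall eps : R, 0 < eps ->
  (bracketing_number mu (cball B) (Hclass sigma r Gs) eps <=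
   covering_number (Mclass (p:=p) sigma r) (supdist (cball B))
     (eps ^+ 2 / (4 * fine (TG sigma mu Gs))))%E.
Proof.
move=> _ s_gt0 _ _ _ _ TG_fin eps _.
have TG0 : (0 <= TG sigma mu Gs)%E.
  by apply: integral_ge0 => x _; apply: mule_ge0; exact: root_mass_ge0.
set t := fine (TG sigma mu Gs).
have TGE : TG sigma mu Gs = t%:E by rewrite /t fineK // ge0_fin_numE.
set eta := eps ^+ 2 / (4 * t).
have eta0 : 0 <= eta by rewrite divr_ge0 ?sqr_ge0 // mulr_ge0 // fine_ge0.
have small_eta : ((4 * eta)%:E * TG sigma mu Gs <= (eps ^+ 2)%:E)%E.
  rewrite TGE -EFinM lee_fin.
  have [->|t_neq0] := eqVneq t 0; first by rewrite mulr0 sqr_ge0.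
  by rewrite /eta le_eqVlt; apply/orP; left; apply/eqP; field.
apply: ereal_inf_le_tmp => _ [n cover <-]; exists n => //.
exact: brackets_of_cover s_gt0 eta0 small_eta cover.
Qed.
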